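(* Let $H$ be a Krull monoid with class group $G$, and let $\emptyset\ne S\subseteq\mathfrak X(H)$ be finite. The following are equivalent: (a) there exists an absolutely irreducible $a\in H$ with $\mathrm{supp}(aH)=S$; (b) $S$ is minimal (w.r.t. inclusion) in $\{\mathrm{supp}(bH): b\in H\setminus H^\times\}$; (c) $S$ is minimal in $\{\mathrm{supp}(bH): b\in H \text{ irreducible}\}$; (d) the family $([\mathfrak p])_{\mathfrak p\in S}$ in $G$ is $\mathbb Z_{\ge0}$-linearly dependent, and every proper subfamily is $\mathbb Z_{\ge0}$-linearly independent; (e) the family $([\mathfrak p])_{\mathfrak p\in S}$ in $G$ is $\mathbb Z_{\ge0}$-linearly dependent, and every proper subfamily is $\mathbb Z$-linearly independent. Moreover, if these conditions hold, the absolutely irreducible element with support $S$ is unique up to associates.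
   Context: $H$ is a cancellative commutative monoid with unit group $H^\times$; it is a Krull monoid if it is $v$-noetherian and completely integrally closed. $\mathfrak X(H)$ denotes the set of nonempty divisorial prime ideals of $H$; every nonempty divisorial ideal $\mathfrak a$ is uniquely a divisorial product $\big(\prod_{\mathfrak p\in\mathfrak X(H)}\mathfrak p^{\mathsf v_\mathfrak p(\mathfrak a)}\big)_v$, and its support is $\mathrm{supp}(\mathfrak a)=\{\mathfrak p\in\mathfrak X(H):\mathsf v_\mathfrak p(\mathfrak a)>0\}$. The class group $G$ is the group of divisorial fractional ideals modulo principal ones, $[\mathfrak a]$ denotes the class of $\mathfrak a$, and $G$ is written additively. A family $(g_\mathfrak p)_{\mathfrak p\in S}$ is $\mathbb Z_{\ge0}$-linearly dependent if $\sum\alpha_\mathfrak p g_\mathfrak p=0$ for some nonzero $(\alpha_\mathfrak p)\in\mathbb Z_{\ge0}^S$ (the empty family counts as independent). Irreducible: non-unit not a product of two non-units. An irreducible $r$ is absolutely irreducible if for every $n$, every factorization of $r^n$ into irreducibles coincides, up to order and associates, with $r\cdots r$. *)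

From HB Require Import structures.
From mathcomp Require Import all_boot all_order all_algebra.
From mathcomp Require Import boolp classical_sets functions cardinality fsbigop.

Set Implicit Arguments.
Unset Strict Implicit.
Unset Printing Implicit Defensive.
Import Order.TTheory GRing.Theory Num.Theory.

Local Open Scope classical_set_scope.
Local Open Scope ring_scope.

(* Convention.  A cancellative commutative monoid H is represented as a     *)
(* submonoid of its quotient group q(H).  The quotient group is an abelian   *)
(* group, given as a zmodType Q, hence WRITTEN ADDITIVELY: the monoid        *)
(* product "a b" of the paper is  a + b  here, the unit element is 0,        *)
(* a^n is  a *+ n,  and  x^{-1}  is  - x.  H : set Q is the carrier.         *)

Section KrullDefs.
Variable Q : zmodType.
Variable H : set Q.

Definition is_monoid_with_quotient_group : Prop :=
  [/\ H 0,
      (forall a b, H a -> H b -> H (a + b)) &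
      (forall x : Q, exists a b, [/\ H a, H b & x = a - b])].

Definition munit (a : Q) : Prop := H a /\ H (- a).

Definition massoc (a b : Q) : Prop := H a /\ H b /\ munit (a - b).

Definition mirreducible (r : Q) : Prop :=
  [/\ H r, ~ munit r &
      forall a b, H a -> H b -> r = a + b -> munit a \/ munit b].

Definition abs_irreducible (r : Q) : Prop :=
  mirreducible r /\
  forall (n : nat) (l : seq Q),
    (forall x, x \in l -> mirreducible x) ->
    \sum_(x <- l) x = r *+ n ->
    size l = n /\ (forall x, x \in l -> massoc x r).

Definition minv (X : set Q) : set Q := [set x | forall y, X y -> H (x + y)].

Definition vclose (X : set Q) : set Q := minv (minv X).

Definition sideal (a : set Q) : Prop :=
  a `<=` H /\ (forall x h, a x -> H h -> a (x + h)).

Definition divisorial_ideal (a : set Q) : Prop := sideal a /\ vclose a = a.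

Definition prime_sideal (p : set Q) : Prop :=
  [/\ sideal p, p <> H &
      forall a b, H a -> H b -> p (a + b) -> p a \/ p b].

Definition XH : set (set Q) :=
  [set p | [/\ p !=set0, prime_sideal p & divisorial_ideal p]].

Definition v_noetherian : Prop :=
  forall f : nat -> set Q,
    (forall n, divisorial_ideal (f n)) ->
    (forall n, f n `<=` f n.+1) ->
    exists m, forall n, (m <= n)%N -> f n = f m.

Definition completely_integrally_closed : Prop :=
  forall x c : Q, H c -> (forall n : nat, H (c + x *+ n)) -> H x.

Definition krull_monoid : Prop :=
  [/\ is_monoid_with_quotient_group, v_noetherian & completely_integrally_closed].

Definition principal (x : Q) : set Q := [set x + h | h in H].

Definition setmul (A B : set Q) : set Q := [set a + b | a in A & b in B].
Definition vmul (A B : set Q) : set Q := vclose (setmul A B).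

Fixpoint vpow (A : set Q) (n : nat) : set Q :=
  if n is n'.+1 then vmul A (vpow A n') else H.

Definition vpowz (A : set Q) (z : int) : set Q :=
  match z with
  | Posz n => vpow A n
  | Negz n => vpow (minv A) n.+1
  end.

Definition vprod (T : set (set Q)) (e : set Q -> nat) : set Q :=
  \big[vmul/H]_(p \in T) vpow p (e p).

Definition vprodz (T : set (set Q)) (e : set Q -> int) : set Q :=
  \big[vmul/H]_(p \in T) vpowz p (e p).

(* v_p(a) = n : the exponent of p in the (unique) representation
   a = (prod_{q in X(H)} q^{e q})_v *)
Definition vexp (a p : set Q) (n : nat) : Prop :=
  exists e : set Q -> nat,
    [/\ [set q | e q <> 0%N] `<=` XH,
        finite_set [set q | e q <> 0%N],
        a = vprod [set q | e q <> 0%N] e &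
        e p = n].

Definition supp (a : set Q) : set (set Q) :=
  [set p | XH p /\ exists n, (0 < n)%N /\ vexp a p n].

(* The class of a divisorial fractional ideal is 0 in the class group G
   iff the ideal is principal. *)
Definition class_zero (A : set Q) : Prop := exists x : Q, A = principal x.

Definition classes_N_dependent (T : set (set Q)) : Prop :=
  exists alpha : set Q -> nat,
    (exists p, T p /\ alpha p <> 0%N) /\ class_zero (vprod T alpha).

Definition classes_N_independent (T : set (set Q)) : Prop :=
  ~ classes_N_dependent T.

Definition classes_Z_independent (T : set (set Q)) : Prop :=
  forall alpha : set Q -> int,
    class_zero (vprodz T alpha) -> forall p, T p -> alpha p = 0.

Definition minimal_in (F : set (set (set Q))) (S : set (set Q)) : Prop :=
  F S /\ forall T, F T -> T `<=` S -> T = S.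

Definition supps_nonunits : set (set (set Q)) :=
  [set T | exists b, [/\ H b, ~ munit b & supp (principal b) = T]].

Definition supps_irreducibles : set (set (set Q)) :=
  [set T | exists b, mirreducible b /\ supp (principal b) = T].

End KrullDefs.

From HB Require Import structures.
From mathcomp Require Import all_boot all_order all_algebra.
From mathcomp Require Import boolp classical_sets functions cardinality fsbigop.

(* Complete integral closure makes every nonempty divisorial ideal invertible
   for the v-product, and the v-noetherian property yields maximal divisorial
   ideals, which are the primes of X(H); together they make the divisorial
   ideals of H a free commutative monoid on X(H).  So each a in H has a
   multiset [factors a] of primes with aH = (prod p)_v: units have no factors,
   associates have the same factors and divisibility is multiset inclusion.  A
   multiset of primes of S factors an element exactly when its class sum
   vanishes, so everything becomes a statement about zero-class exponent
   vectors on S, atoms being the minimal ones.  If every proper subfamily of S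
   is Z-independent, any two zero-class vectors on S are proportional; hence
   all atoms supported in S are associated, which gives absolute
   irreducibility and uniqueness.  Conversely, Z-independence of a proper
   subfamily T follows from N-independence by an exchange argument: a relation
   between two vectors on T, combined with a positive relation on all of S,
   yields a nonnegative relation vanishing at some point of S. *)

Set Implicit Arguments.
Unset Strict Implicit.
Unset Printing Implicit Defensive.
Import GRing.Theory.
Local Open Scope classical_set_scope.
Local Open Scope ring_scope.

Lemma perm_count_mem (T : eqType) (s1 s2 : seq T) :
  (forall x, count_mem x s1 = count_mem x s2) -> perm_eq s1 s2.
Proof. by move=> h; apply/allP => x _; rewrite /= h. Qed.

Lemma count_mem_gt0 (T : eqType) (x : T) s : (0 < count_mem x s)%N = (x \in s).
Proof. by rewrite -has_count has_pred1. Qed.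

Lemma count_mem_le_perm_cat (T : eqType) (s1 s2 : seq T) :
  (forall x, count_mem x s1 <= count_mem x s2)%N -> exists r, perm_eq s2 (s1 ++ r).
Proof.
elim: s1 s2 => [|x s1 IH] s2 h; first by exists s2.
have xs2 : x \in s2 by rewrite -count_mem_gt0; apply: leq_trans (h x); rewrite /= eqxx.
have [r pr] : exists r, perm_eq (rem x s2) (s1 ++ r).
  apply: IH => y; rewrite count_mem_rem.
  have := h y; rewrite /= eq_sym; case: (y == x) => /=; last by rewrite subn0.
  by rewrite add1n subn1 => hy; rewrite -ltnS prednK //; apply: leq_trans hy.
by exists r; apply: perm_trans (perm_to_rem xs2) _; rewrite /= perm_cons.
Qed.

Lemma sumn_map_const (T : eqType) (s : seq T) (f : T -> nat) k :
  (forall x, x \in s -> f x = k) -> sumn (map f s) = (size s * k)%N.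
Proof.
elim: s => [|x s IH] //= h; rewrite h ?mem_head // IH ?mulSn //.
by move=> y ys; apply: h; rewrite inE ys orbT.
Qed.

Lemma seq_min_ratio (T : eqType) (s : seq T) (P : pred T) (f g : T -> nat) :
  (forall x, P x -> 0 < g x)%N -> has P s ->
  exists x, [/\ x \in s, P x & forall y, y \in s -> P y -> (f x * g y <= f y * g x)%N].
Proof.
elim: s => [|x s IH] // gpos hs.
case: (boolP (has P s)) => [hPs|nhPs]; last first.
  have Px : P x by move: hs => /= /orP [//|h]; rewrite h in nhPs.
  exists x; split=> //; first by rewrite mem_head.
  move=> y; rewrite inE => /orP [/eqP ->//|ys] Py.
  by case/hasP: nhPs; exists y.
have [q [qs Pq mq]] := IH gpos hPs.
case: (boolP (P x && (f x * g q < f q * g x)%N)) => [/andP [Px lt]|nb].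
  exists x; split=> //; first by rewrite mem_head.
  move=> y; rewrite inE => /orP [/eqP ->|ys] Py; first by [].
  rewrite -(leq_pmul2r (gpos q Pq)).
  apply: (@leq_trans (f q * g x * g y)%N).
    by rewrite mulnAC leq_mul2r (ltnW lt) orbT.
  by rewrite mulnAC [(f y * g x * g q)%N]mulnAC leq_mul2r (mq y ys Py) orbT.
exists q; split=> //; first by rewrite inE qs orbT.
move=> y; rewrite inE => /orP [/eqP ->|ys] Py; last exact: mq.
by move: nb; rewrite Py /= -leqNgt.
Qed.

Section Krull.
Variable Q : zmodType.
Variable H : set Q.
Hypothesis H0 : H 0.
Hypothesis HD : forall a b, H a -> H b -> H (a + b).

Local Notation M := (minv H).
Local Notation V := (vclose H).
Local Notation sm := (@setmul Q).

Lemma minv_anti X Y : X `<=` Y -> M Y `<=` M X.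
Proof. by move=> XY x Hx y /XY; exact: Hx. Qed.

Lemma vclose_ext X : X `<=` V X.
Proof. by move=> x Xx y My; rewrite addrC; apply: My. Qed.

Lemma vclose_mono X Y : X `<=` Y -> V X `<=` V Y.
Proof. by move=> XY; apply: minv_anti; apply: minv_anti. Qed.

Lemma minv_vclose X : M (V X) = M X.
Proof.
apply/seteqP; split; first by apply: minv_anti; apply: vclose_ext.
by move=> x Mx y Vy; rewrite addrC; apply: Vy.
Qed.

Lemma vcloseK X : V (V X) = V X.
Proof. by rewrite /vclose -/(vclose H X) minv_vclose. Qed.

Lemma vclose_minv X : V (M X) = M X.
Proof. by rewrite /vclose -/(vclose H X) minv_vclose. Qed.

Lemma minvH : M H = H.
Proof.
apply/seteqP; split; first by move=> x /(_ 0 H0); rewrite addr0.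
by move=> x Hx y Hy; apply: HD.
Qed.

Lemma vcloseH : V H = H.
Proof. by rewrite /vclose minvH minvH. Qed.

Lemma vclose_sub X : X `<=` H -> V X `<=` H.
Proof. by move=> XH; rewrite -[Y in _ `<=` Y]vcloseH; apply: vclose_mono. Qed.

Lemma vclose_eqH X : M X = H -> V X = H.
Proof. by move=> e; rewrite /vclose e minvH. Qed.

Lemma minv0 X : X `<=` H -> M X 0.
Proof. by move=> XH; apply: (minv_anti XH); rewrite minvH. Qed.

Lemma setmulC X Y : sm X Y = sm Y X.
Proof.
by apply/seteqP; split=> z [a Xa [b Yb <-]]; exists b => //; exists a => //; rewrite addrC.
Qed.

Lemma setmulA X Y Z : sm X (sm Y Z) = sm (sm X Y) Z.
Proof.
apply/seteqP; split=> z.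
  move=> [a Xa [_ [b Yb [c Zc <-]] <-]].
  by exists (a + b); [exists a => //; exists b|exists c => //; rewrite addrA].
move=> [_ [a Xa [b Yb <-]] [c Zc <-]].
by exists a => //; exists (b + c); [exists b => //; exists c|rewrite addrA].
Qed.

Lemma set0mul X : sm [set 0] X = X.
Proof.
apply/seteqP; split=> z; first by move=> [a -> [b Xb <-]]; rewrite add0r.
by move=> Xz; exists 0 => //; exists z => //; rewrite add0r.
Qed.

HB.instance Definition _ := Monoid.isComLaw.Build (set Q) [set 0] (@setmul Q)
  setmulA setmulC set0mul.

Lemma setmulACA X Y Z W : sm (sm X Y) (sm Z W) = sm (sm X Z) (sm Y W).
Proof. by rewrite -!setmulA [sm Y (sm Z W)]setmulA [sm Y Z]setmulC -setmulA. Qed.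

Lemma setmul_mono X X' Y Y' : X `<=` X' -> Y `<=` Y' -> sm X Y `<=` sm X' Y'.
Proof. by move=> XX YY z [a /XX Xa [b /YY Yb <-]]; exists a => //; exists b. Qed.

Lemma minv_setmul_vclose X Y : M (sm X (V Y)) = M (sm X Y).
Proof.
apply/seteqP; split.
  by apply: minv_anti; apply: setmul_mono => //; apply: vclose_ext.
move=> x Mx _ [u Xu [z Vz <-]].
rewrite addrA addrC; apply: Vz => y Yy; rewrite -addrA; apply: Mx.
by exists u => //; exists y.
Qed.

Lemma vclose_mulV X Y : V (sm X (V Y)) = V (sm X Y).
Proof. by rewrite /vclose -/(minv H (sm X (V Y))) minv_setmul_vclose. Qed.

Lemma vclose_Vmul X Y : V (sm (V X) Y) = V (sm X Y).
Proof. by rewrite setmulC vclose_mulV setmulC. Qed.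

Definition Hstable (X : set Q) := forall x h, X x -> H h -> X (x + h).

Lemma setmulHH : sm H H = H.
Proof.
apply/seteqP; split; first by move=> z [a Ha [b Hb <-]]; apply: HD.
by move=> z Hz; exists z => //; exists 0 => //; rewrite addr0.
Qed.

Lemma Hstable_vclose X : Hstable (V X).
Proof. by move=> x h Mx Hh y Xy; rewrite addrAC; apply: HD => //; apply: Mx. Qed.

Lemma vclose_mulH X : V (sm X H) = V X.
Proof.
apply/seteqP; split; last first.
  by apply: vclose_mono => z Xz; exists z => //; exists 0 => //; rewrite addr0.
rewrite -[X in _ `<=` X]vcloseK; apply: vclose_mono.
move=> _ [a Xa [h Hh <-]]; apply: Hstable_vclose => //; exact: vclose_ext.
Qed.

Lemma vclose_Hmul X : V (sm H X) = V X.
Proof. by rewrite setmulC vclose_mulH. Qed.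

Definition shift (x : Q) (X : set Q) : set Q := [set x + y | y in X].

Lemma shift_minv x X : M (shift x X) = shift (- x) (M X).
Proof.
apply/seteqP; split=> z.
  move=> Mz; exists (x + z); last by rewrite addKr.
  by move=> y Xy; rewrite [x + z]addrC -addrA; apply: Mz; exists y.
move=> [w Mw <-] _ [y Xy <-].
by rewrite [-x + w]addrC -addrA addKr; apply: Mw.
Qed.

Lemma shiftK x X : shift (- x) (shift x X) = X.
Proof.
apply/seteqP; split=> z; first by move=> [_ [y Xy <-] <-]; rewrite addKr.
by move=> Xz; exists (x + z); [exists z | rewrite addKr].
Qed.

Lemma shift0 X : shift 0 X = X.
Proof.
apply/seteqP; split=> z; first by move=> [w Xw <-]; rewrite add0r.
by exists z => //; rewrite add0r.
Qed.

Lemma shift_shift x y X : shift x (shift y X) = shift (x + y) X.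
Proof.
apply/seteqP; split=> z.
  by move=> [_ [w Xw <-] <-]; exists w => //; rewrite addrA.
by move=> [w Xw <-]; exists (y + w); [exists w|rewrite addrA].
Qed.

Lemma shift_vclose x X : V (shift x X) = shift x (V X).
Proof. by rewrite /vclose shift_minv shift_minv opprK. Qed.

Lemma shift_setmul x X Y : shift x (sm X Y) = sm (shift x X) Y.
Proof.
apply/seteqP; split=> z.
  move=> [_ [a Xa [b Yb <-]] <-].
  by exists (x + a); [exists a|exists b => //; rewrite addrA].
move=> [_ [a Xa <-] [b Yb <-]].
by exists (a + b); [exists a => //; exists b|rewrite addrA].
Qed.

Lemma setmul_shift x y X Y : sm (shift x X) (shift y Y) = shift (x + y) (sm X Y).
Proof. by rewrite -shift_setmul setmulC -shift_setmul setmulC shift_shift addrC. Qed.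

Lemma shiftH_self x : shift x H x.
Proof. by exists 0 => //; rewrite addr0. Qed.

Hypothesis cic : completely_integrally_closed H.
Hypothesis acc : v_noetherian H.

Definition fractional (A : set Q) := A !=set0 /\ M A !=set0.

Lemma fractional_sub A : A !=set0 -> A `<=` H -> fractional A.
Proof. by move=> nA AH; split=> //; exists 0; apply: minv0. Qed.

(* Complete integral closedness is exactly what makes (A (H : A))_v = H. *)
Lemma vclose_mul_minv A : fractional A -> V (sm A (M A)) = H.
Proof.
move=> [[a Aa] [b Mb]].
have sH : sm A (M A) `<=` H by move=> _ [x Ax [y My <-]]; rewrite addrC; apply: My.
suff e : M (sm A (M A)) = H by rewrite /vclose e minvH.
apply/seteqP; split; last by rewrite -[X in X `<=` _]minvH; apply: minv_anti.
move=> x Mx.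
have step y : M A y -> M A (x + y).
  move=> My z Az; rewrite -addrA [y + z]addrC.
  by apply: Mx; exists z => //; exists y.
have nstep n : M A (x *+ n + b).
  by elim: n => [|n IH]; rewrite ?mulr0n ?add0r // mulrS -addrA; apply: step.
apply: (cic (c := a + b)); first by apply: sH; exists a => //; exists b.
by move=> n; rewrite -addrA [b + _]addrC addrC; exact: (nstep n a Aa).
Qed.

Lemma vmul_cancel A B C : fractional A -> V (sm A B) = V (sm A C) -> V B = V C.
Proof.
move=> fA e.
have E X : V (sm (M A) (V (sm A X))) = V X.
  rewrite vclose_mulV setmulA -vclose_Vmul [sm (M A) A]setmulC.
  by rewrite (vclose_mul_minv fA) vclose_Hmul.
by rewrite -E e E.
Qed.

Lemma vclose_eq_minv X Y : fractional Y -> V (sm X Y) = H -> V X = M Y.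
Proof.
move=> fY e.
have E : V (sm X (V (sm Y (M Y)))) = V X by rewrite (vclose_mul_minv fY) vclose_mulH.
by rewrite -E vclose_mulV setmulA -vclose_Vmul e vclose_Hmul vclose_minv.
Qed.

Lemma vclose_mul_minvs A B : fractional A -> fractional B ->
  V (sm (M A) (M B)) = M (V (sm A B)).
Proof.
move=> fA fB; have [[a Aa] [a' Ma]] := fA; have [[b Bb] [b' Mb]] := fB.
apply: vclose_eq_minv.
  split; first by exists (a + b); apply: vclose_ext; exists a => //; exists b.
  rewrite minv_vclose; exists (a' + b') => _ [x Ax [y By <-]]; rewrite addrACA.
  by apply: HD; [exact: Ma _ Ax|exact: Mb _ By].
rewrite vclose_mulV setmulACA -vclose_Vmul -vclose_mulV.
rewrite [sm (M A) A]setmulC [sm (M B) B]setmulC !vclose_mul_minv //.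
by rewrite setmulHH vcloseH.
Qed.

(* Multiplying by H before closing makes [vprodl [::] = H]. *)
Definition setsum (l : seq (set Q)) : set Q := \big[sm/[set 0]]_(X <- l) X.
Definition vprodl (l : seq (set Q)) : set Q := V (sm (setsum l) H).

Lemma setsum_cons X l : setsum (X :: l) = sm X (setsum l).
Proof. by rewrite /setsum big_cons. Qed.

Lemma vprodl_perm l1 l2 : perm_eq l1 l2 -> vprodl l1 = vprodl l2.
Proof. by move=> pl; rewrite /vprodl /setsum (perm_big _ pl). Qed.

Lemma vprodl_nil : vprodl [::] = H.
Proof. by rewrite /vprodl /setsum big_nil set0mul vcloseH. Qed.

Lemma vprodl_cat l1 l2 : vprodl (l1 ++ l2) = V (sm (vprodl l1) (vprodl l2)).
Proof.
by rewrite /vprodl vclose_Vmul vclose_mulV setmulACA setmulHH /setsum big_cat.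
Qed.

Lemma vprodl_cons X l : vprodl (X :: l) = vmul H X (vprodl l).
Proof. by rewrite /vprodl /vmul vclose_mulV setmulA setsum_cons. Qed.

Lemma vclose_vprodl l : V (vprodl l) = vprodl l.
Proof. exact: vcloseK. Qed.

Lemma vpow_vprodl p n : vpow H p n = vprodl (nseq n p).
Proof. by elim: n => [|n IH] /=; rewrite ?vprodl_nil // vprodl_cons IH. Qed.

Lemma big_vmul_vprodl (s : seq (set Q)) (g : set Q -> seq (set Q)) :
  \big[vmul H/H]_(q <- s) vprodl (g q) = vprodl (flatten (map g s)).
Proof.
elim: s => [|q s IH]; first by rewrite big_nil vprodl_nil.
by rewrite big_cons IH /= vprodl_cat.
Qed.

Definition all_XH (l : seq (set Q)) := forall p, p \in l -> XH H p.

Lemma XH_sub p : XH H p -> p `<=` H.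
Proof. by case=> _ [[]]. Qed.
Lemma XH_Hstable p : XH H p -> Hstable p.
Proof. by case=> _ [[]]. Qed.
Lemma XH_vclose p : XH H p -> V p = p.
Proof. by case=> _ _ []. Qed.
Lemma XH_neq0 p : XH H p -> p !=set0.
Proof. by case. Qed.
Lemma XH_neqH p : XH H p -> p <> H.
Proof. by case=> _ []. Qed.
Lemma XH_prime p : XH H p -> forall a b, H a -> H b -> p (a + b) -> p a \/ p b.
Proof. by case=> _ []. Qed.
Lemma XH_fractional p : XH H p -> fractional p.
Proof. by move=> hp; apply: fractional_sub; [exact: XH_neq0|exact: XH_sub]. Qed.

Lemma XH_notin0 p : XH H p -> ~ p 0.
Proof.
move=> hp p0; apply: (XH_neqH hp); apply/seteqP; split; first exact: XH_sub.
by move=> h Hh; rewrite -[h]add0r; apply: (XH_Hstable hp).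
Qed.

Lemma all_XH_cons p l : all_XH (p :: l) <-> XH H p /\ all_XH l.
Proof.
split; first by move=> h; split=> [|q ql]; apply: h; rewrite inE ?ql ?orbT ?eqxx.
by case=> hp hl q; rewrite inE => /orP [/eqP ->|/hl].
Qed.

Lemma all_XH_cat l1 l2 : all_XH (l1 ++ l2) <-> all_XH l1 /\ all_XH l2.
Proof.
split; first by move=> h; split=> q ql; apply: h; rewrite mem_cat ql ?orbT.
by case=> h1 h2 q; rewrite mem_cat => /orP [/h1|/h2].
Qed.

Lemma all_XH_nseq p n : XH H p -> all_XH (nseq n p).
Proof. by move=> hp q /nseqP [->]. Qed.

Lemma setsum_sub l : all_XH l -> setsum l `<=` H.
Proof.
elim: l => [|p l IH] hl; first by rewrite /setsum big_nil => x ->.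
case/all_XH_cons: hl => hp hl; rewrite setsum_cons => _ [x px [y sy <-]].
by apply: HD; [apply: (XH_sub hp)| apply: IH].
Qed.

Lemma setsum_neq0 l : all_XH l -> setsum l !=set0.
Proof.
elim: l => [|p l IH] hl; first by exists 0; rewrite /setsum big_nil.
case/all_XH_cons: hl => hp hl; rewrite setsum_cons.
case: (XH_neq0 hp) => x px; case: (IH hl) => y sy.
by exists (x + y); exists x => //; exists y.
Qed.

Lemma vprodl_sub l : all_XH l -> vprodl l `<=` H.
Proof.
move=> hl; apply: vclose_sub; rewrite -[X in _ `<=` X]setmulHH.
by apply: setmul_mono => //; apply: setsum_sub.
Qed.

Lemma vprodl_fractional l : all_XH l -> fractional (vprodl l).
Proof.
move=> hl; apply: fractional_sub; last exact: vprodl_sub.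
case: (setsum_neq0 hl) => x sx; exists (x + 0); apply: vclose_ext.
by exists x => //; exists 0.
Qed.

Lemma vprodl_sub_mem l p : all_XH l -> p \in l -> vprodl l `<=` p.
Proof.
move=> hl pl; rewrite (vprodl_perm (perm_to_rem pl)) vprodl_cons.
have hp := hl p pl.
rewrite /vmul; apply: (@subset_trans _ (V (sm p H))); last first.
  by rewrite vclose_mulH XH_vclose.
apply: vclose_mono; apply: setmul_mono => //.
by apply: vprodl_sub => q qr; apply: hl; exact: (mem_rem qr).
Qed.

Lemma v_noetherian_max (P : set Q -> Prop) :
  (forall B, P B -> divisorial_ideal H B) ->
  forall B0, P B0 -> exists m, P m /\ forall B, P B -> m `<=` B -> B = m.
Proof.
move=> hP B0 PB0; apply: contrapT => nomax.
have step m : P m -> exists B, P B /\ m `<=` B /\ B <> m.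
  move=> Pm; apply: contrapT => nex; apply: nomax; exists m; split=> // B PB mB.
  by apply: contrapT => neq; apply: nex; exists B.
pose g m := match pselect (exists B, P B /\ m `<=` B /\ B <> m) with
  | left ex => projT1 (cid ex) | right _ => m end.
have gP m : P m -> [/\ P (g m), m `<=` g m & g m <> m].
  move=> Pm; rewrite /g; case: pselect => [ex|nex]; last by case: nex; apply: step.
  by case: (cid ex) => B [PB [mB nB]].
pose f n := iter n g B0.
have Pf n : P (f n) by elim: n => [|n IH] //=; case: (gP _ IH).
have [m0 Hm0] := acc (fun n => hP _ (Pf n))
  (fun n => let: And3 _ s _ := gP _ (Pf n) in s).
by case: (gP _ (Pf m0)) => _ _; apply; exact: (Hm0 m0.+1 (leqnSn m0)).
Qed.

Lemma divisorial_idealP A : A `<=` H -> V A = A -> divisorial_ideal H A.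
Proof. by move=> AH VA; split=> //; split=> //; rewrite -VA; apply: Hstable_vclose. Qed.

Lemma XH_maximal p m : XH H p -> m `<=` H -> V m = m -> p `<=` m -> m <> H -> m = p.
Proof.
move=> hp mH Vm pm mneH.
have fm : fractional m.
  by apply: fractional_sub => //; case: (XH_neq0 hp) => x px; exists x; apply: pm.
pose B := V (sm (M m) p).
have BH : B `<=` H.
  by apply: vclose_sub => _ [x Mx [y py <-]]; apply: Mx; apply: pm.
have eB : V (sm m B) = p.
  rewrite /B vclose_mulV setmulA -vclose_Vmul (vclose_mul_minv fm).
  by rewrite vclose_Hmul XH_vclose.
case: (pselect (m `<=` p)) => [mp|nmp]; first by apply/seteqP; split.
exfalso.
have [u [mu npu]] : exists u, m u /\ ~ p u.
  by move: nmp => /existsNP [u /not_implyP [mu npu]]; exists u.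
have Bp : B `<=` p.
  move=> b Bb; have : p (u + b).
    by rewrite -eB; apply: vclose_ext; exists u => //; exists b.
  by case/(XH_prime hp (mH u mu) (BH b Bb)).
have e2 : V (sm p m) = V (sm p H).
  apply/seteqP; split; first by apply: vclose_mono; apply: setmul_mono.
  rewrite vclose_mulH (XH_vclose hp) -[X in X `<=` _]eB; apply: vclose_mono.
  by rewrite setmulC; apply: setmul_mono.
by have := vmul_cancel (XH_fractional hp) e2; rewrite Vm vcloseH.
Qed.

(* A maximal proper divisorial ideal is prime: otherwise it would contain the
   v-product of the two strictly larger ideals it generates with a and b. *)
Lemma divisorial_sub_XH A : A !=set0 -> A `<=` H -> V A = A -> A <> H ->
  exists p, XH H p /\ A `<=` p.
Proof.
move=> nA AH VA AneH.
pose P B := [/\ divisorial_ideal H B, A `<=` B & B <> H].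
have [m [[[[mH mmod] Vm] Am mneH] mmax]] :=
  v_noetherian_max (fun B (PB : P B) => let: And3 d _ _ := PB in d)
    (And3 (divisorial_idealP AH VA) (@subset_refl _ A) AneH).
exists m; split=> //; split.
- by case: nA => x Ax; exists x; apply: Am.
- split; [by split|exact: mneH|].
  move=> a b Ha Hb mab; apply: contrapT => /not_orP [nma nmb].
  have big c : H c -> ~ m c -> V (m `|` shift c H) = H.
    move=> Hc nmc; apply: contrapT => ne.
    have sub : V (m `|` shift c H) `<=` H.
      apply: vclose_sub => x [/mH //|[h Hh <-]]; exact: HD.
    have mV : m `<=` V (m `|` shift c H).
      by apply: subset_trans (@vclose_ext _); apply: subsetUl.
    have PV : P (V (m `|` shift c H)).
      by split=> //; [apply: divisorial_idealP => //; apply: vcloseK|apply: subset_trans mV].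
    apply: nmc; rewrite -(mmax _ PV mV); apply: vclose_ext; right.
    exact: shiftH_self.
  have eH : V (sm (m `|` shift a H) (m `|` shift b H)) = H.
    by rewrite -vclose_mulV -vclose_Vmul (big a Ha nma) (big b Hb nmb) setmulHH vcloseH.
  apply: mneH; apply/seteqP; split=> //; rewrite -eH -[X in _ `<=` X]Vm.
  apply: vclose_mono => _ [x [mx|[h Hh <-]] [y [my|[h' Hh' <-]] <-]].
  + by apply: mmod => //; apply: mH.
  + by apply: mmod => //; apply: HD.
  + by rewrite addrC; apply: mmod => //; apply: HD.
  + by rewrite -addrA [h + _]addrCA addrA; apply: mmod => //; apply: HD.
- by split=> //; split.
Qed.

Lemma divisorial_factorization A : A !=set0 -> A `<=` H -> V A = A ->
  exists l, all_XH l /\ A = vprodl l.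
Proof.
move=> nA AH VA; apply: contrapT => nfac.
pose P B := [/\ B !=set0, divisorial_ideal H B & ~ exists l, all_XH l /\ B = vprodl l].
have [m [[nm [[mH mmod] Vm] nfm] mmax]] :=
  v_noetherian_max (fun B (PB : P B) => let: And3 _ d _ := PB in d)
    (And3 nA (divisorial_idealP AH VA) nfac).
have mneH : m <> H by move=> e; apply: nfm; exists [::]; rewrite vprodl_nil.
have [p [hp mp]] := divisorial_sub_XH nm mH Vm mneH.
have fm : fractional m by apply: fractional_sub.
pose m' := V (sm m (M p)).
have m'H : m' `<=` H.
  by apply: vclose_sub => _ [x mx [y My <-]]; rewrite addrC; apply: My; apply: mp.
have mm' : m `<=` m'.
  move=> x mx; apply: vclose_ext; exists x => //; exists 0; last by rewrite addr0.
  by apply: minv0; apply: XH_sub.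
have em : V (sm m' p) = m.
  rewrite /m' vclose_Vmul -setmulA -vclose_mulV [sm (M p) p]setmulC.
  by rewrite (vclose_mul_minv (XH_fractional hp)) vclose_mulH.
have ne : m' <> m.
  move=> e; have e2 : V (sm m p) = V (sm m H) by rewrite vclose_mulH Vm -{1}e em.
  have := vmul_cancel fm e2; rewrite vcloseH XH_vclose //; exact: XH_neqH.
have [l [hl el]] : exists l, all_XH l /\ m' = vprodl l.
  apply: contrapT => nf; apply: ne; apply: (mmax _ _ mm'); split=> //.
    by case: nm => x mx; exists x; apply: mm'.
  by apply: divisorial_idealP => //; apply: vcloseK.
apply: nfm; exists (p :: l); split; first by apply/all_XH_cons.
by rewrite vprodl_cons /vmul -el setmulC em.
Qed.

Lemma setsum_notin_XH l p : all_XH l -> XH H p -> (forall q, q \in l -> ~ q `<=` p) ->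
  exists y, [/\ setsum l y, H y & ~ p y].
Proof.
move=> + hp; elim: l => [|q l IH] hl nex.
  by exists 0; split; [rewrite /setsum big_nil|exact: H0|exact: XH_notin0].
case/all_XH_cons: hl => hq hl.
have [x [qx npx]] : exists x, q x /\ ~ p x.
  have : ~ q `<=` p by apply: nex; rewrite inE eqxx.
  by move=> /existsNP [x /not_implyP [qx npx]]; exists x.
have [|y [sy Hy npy]] := IH hl.
  by move=> r rl; apply: nex; rewrite inE rl orbT.
exists (x + y); split.
- by rewrite setsum_cons; exists x => //; exists y.
- by apply: HD => //; apply: (XH_sub hq).
- by case/(XH_prime hp (XH_sub hq qx) Hy).
Qed.

Lemma vprodl_sub_XH l p : all_XH l -> XH H p -> vprodl l `<=` p ->
  exists2 q, q \in l & q `<=` p.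
Proof.
move=> hl hp Dp; apply: contrapT => nex.
have [y [sy Hy npy]] := setsum_notin_XH hl hp (fun q ql qp => nex (ex_intro2 _ _ q ql qp)).
apply: npy; rewrite -[y]addr0; apply: Dp; apply: vclose_ext.
by exists y => //; exists 0.
Qed.

Lemma vprodl_inj l l' : all_XH l -> all_XH l' -> vprodl l = vprodl l' -> perm_eq l l'.
Proof.
elim: l l' => [|p l IH] l' hl hl' e.
  case: l' e hl' => [//|q r] e hl'.
  have hq := hl' q (mem_head _ _).
  exfalso; apply: (XH_neqH hq); apply/seteqP; split; first exact: XH_sub.
  by rewrite -vprodl_nil e; apply: vprodl_sub_mem => //; rewrite inE eqxx.
case/all_XH_cons: (hl) => hp hl1.
have : vprodl l' `<=` p by rewrite -e; apply: vprodl_sub_mem => //; rewrite inE eqxx.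
case/(vprodl_sub_XH hl' hp) => q ql' qp.
have hq := hl' q ql'.
have epq : p = q := XH_maximal hq (XH_sub hp) (XH_vclose hp) qp (XH_neqH hp).
subst q.
have hr : all_XH (rem p l') by move=> r /mem_rem; apply: hl'.
have e2 : vprodl l = vprodl (rem p l').
  rewrite -vclose_vprodl -[RHS]vclose_vprodl.
  apply: (vmul_cancel (XH_fractional hp)).
  by have := e; rewrite (vprodl_perm (perm_to_rem ql')) !vprodl_cons.
apply: (@perm_trans _ (p :: rem p l')); first by rewrite perm_cons; apply: IH.
by rewrite perm_sym perm_to_rem.
Qed.

Definition expand (s : seq (set Q)) (e : set Q -> nat) : seq (set Q) :=
  flatten [seq nseq (e q) q | q <- s].

Definition restrict (T : set (set Q)) (e : set Q -> nat) (p : set Q) : nat :=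
  if `[< T p >] then e p else 0%N.

Lemma count_expand (T : set (set Q)) s e : uniq s -> (forall q, q \in s -> T q) ->
  (forall q, T q -> e q <> 0%N -> q \in s) ->
  forall p, count_mem p (expand s e) = restrict T e p.
Proof.
move=> us sT Ts p; have -> : count_mem p (expand s e) = if p \in s then e p else 0%N.
  elim: s us {sT Ts} => [|q s IH] //= /andP [qs us].
  rewrite count_cat IH // count_nseq.
  case: (eqVneq p q) => [->|npq] /=.
    by rewrite (negbTE qs) mem_head eqxx /= addn0 mul1n.
  by rewrite inE eq_sym (negbTE npq) /=; case: (p \in s).
rewrite /restrict; case: (boolP (p \in s)) => [/sT Tp|nps]; first by rewrite asboolT.
case: (asboolP (T p)) => // Tp.
by case: (e p =P 0%N) => // ne; case/negP: nps; apply: Ts.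
Qed.

Lemma all_XH_expand (T : set (set Q)) s e : T `<=` XH H ->
  (forall q, q \in s -> T q) -> all_XH (expand s e).
Proof. by move=> TX hs q /flattenP [_ /mapP [r rs ->]] /nseqP [-> _]; apply/TX/hs. Qed.

Lemma in_finite_supportH (T : set (set Q)) (F : set Q -> set Q) q :
  finite_set T -> q \in finite_support H T F <-> T q /\ F q <> H.
Proof.
move=> fT; rewrite in_finite_support; last exact: finite_setIl.
by rewrite in_setE.
Qed.

Lemma vpow_neqH p n : XH H p -> n <> 0%N -> vpow H p n <> H.
Proof.
move=> hp n0 e; apply: (XH_neqH hp); apply/seteqP; split; first exact: XH_sub.
rewrite -e vpow_vprodl => t /vprodl_sub_mem; apply; first exact: all_XH_nseq.
by case: n n0 {e} => // n _; rewrite inE eqxx.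
Qed.

Lemma vprodE (T : set (set Q)) (e : set Q -> nat) : finite_set T -> T `<=` XH H ->
  exists l, [/\ vprod H T e = vprodl l, all_XH l &
                forall p, count_mem p l = restrict T e p].
Proof.
move=> fT TX; set s := finite_support H T (fun q => vpow H q (e q)).
have mems q : q \in s <-> T q /\ e q <> 0%N.
  rewrite in_finite_supportH //; split=> [[Tq nH]|[Tq e0]]; split=> //.
    by move=> e0; apply: nH; rewrite e0.
  exact: vpow_neqH (TX q Tq) e0.
exists (expand s e); split.
- rewrite /vprod -/s (eq_bigr (fun q => vprodl (nseq (e q) q))).
    exact: big_vmul_vprodl.
  by move=> q _; rewrite vpow_vprodl.
- by apply: (all_XH_expand TX) => q /mems [].
- apply: count_expand; first exact: finite_support_uniq.
    by move=> q /mems [].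
  by move=> q Tq nz; apply/mems.
Qed.

Lemma vexp_vprodl l p n : all_XH l -> (vexp H (vprodl l) p n <-> n = count_mem p l).
Proof.
move=> hl; split.
  move=> [e [sX fin eD <-]].
  have [l' [eD' hl' cl']] := vprodE e fin sX.
  have pl : perm_eq l l' by apply: vprodl_inj => //; rewrite -eD'.
  rewrite (permP pl) cl' /restrict.
  by case: (asboolP (e p <> 0%N)) => // /contrapT ->.
move=> ->; pose e q := count_mem q l; exists e.
have sX : [set q | e q <> 0%N] `<=` XH H.
  by move=> q /= /eqP; rewrite -lt0n count_mem_gt0 => /hl.
have fin : finite_set [set q | e q <> 0%N].
  apply: (sub_finite_set _ (finite_seq l)) => q /= /eqP.
  by rewrite -lt0n count_mem_gt0.
split=> //; have [l' [-> _ cl']] := vprodE e fin sX.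
apply: vprodl_perm; apply: perm_count_mem => q.
rewrite cl' /restrict; case: (asboolP (e q <> 0%N)) => // /contrapT.
by rewrite /e => ->.
Qed.

Lemma supp_vprodl l : all_XH l -> supp H (vprodl l) = [set p | p \in l].
Proof.
move=> hl; apply/seteqP; split=> p.
  by move=> [Xp [n [n0 /(vexp_vprodl _ _ hl) en]]]; rewrite /= -count_mem_gt0 -en.
move=> /= pl; split; first exact: hl.
by exists (count_mem p l); split; [rewrite count_mem_gt0|apply/(vexp_vprodl _ _ hl)].
Qed.

Lemma principal_divisorial x : H x ->
  [/\ shift x H !=set0, shift x H `<=` H & V (shift x H) = shift x H].
Proof.
move=> Hx; split; first by exists x; exact: shiftH_self.
- by move=> _ [h Hh <-]; apply: HD.
- by rewrite shift_vclose vcloseH.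
Qed.

(* Junk value [::] when x is not in H. *)
Definition factors (x : Q) : seq (set Q) :=
  match pselect (exists l, all_XH l /\ shift x H = vprodl l) with
  | left ex => projT1 (cid ex)
  | right _ => [::]
  end.

Lemma factors_spec x : H x -> all_XH (factors x) /\ shift x H = vprodl (factors x).
Proof.
move=> Hx; rewrite /factors; case: pselect => [ex|nex]; first by case: (cid ex).
have [n s v] := principal_divisorial Hx.
by case: nex; apply: divisorial_factorization.
Qed.

Lemma all_XH_factors x : H x -> all_XH (factors x).
Proof. by case/factors_spec. Qed.

Lemma vprodl_factors x : H x -> vprodl (factors x) = shift x H.
Proof. by case/factors_spec. Qed.

Lemma factors_vprodl x l : H x -> all_XH l -> vprodl l = shift x H ->
  perm_eq (factors x) l.
Proof.
by move=> Hx hl e; apply: vprodl_inj => //; [apply: all_XH_factors|rewrite e vprodl_factors].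
Qed.

Lemma supp_principal x : H x -> supp H (principal H x) = [set p | p \in factors x].
Proof. by move=> Hx; rewrite -supp_vprodl ?vprodl_factors //; exact: all_XH_factors. Qed.

Lemma factorsD x y : H x -> H y -> perm_eq (factors (x + y)) (factors x ++ factors y).
Proof.
move=> Hx Hy; apply: factors_vprodl; first exact: HD.
  by apply/all_XH_cat; split; apply: all_XH_factors.
by rewrite vprodl_cat !vprodl_factors // setmul_shift setmulHH shift_vclose vcloseH.
Qed.

Lemma munitP x : H x -> munit H x <-> factors x = [::].
Proof.
move=> Hx; split.
  move=> [_ Hnx].
  have e : shift x H = H.
    apply/seteqP; split; first by case: (principal_divisorial Hx).
    by move=> h Hh; exists (- x + h); [apply: HD|rewrite addNKr].
  have := @factors_vprodl x [::] Hx (fun _ => ltac:(done)).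
  by rewrite vprodl_nil e => /(_ erefl) /perm_nilP.
move=> f0; split=> //.
have : shift x H 0 by rewrite -vprodl_factors // f0 vprodl_nil.
by move=> [h Hh /eqP]; rewrite addr_eq0 => /eqP ->; rewrite opprK.
Qed.

Lemma factors0 : factors 0 = [::].
Proof. by apply/munitP => //; split=> //; rewrite oppr0. Qed.

Lemma factors_dvd x y r : H x -> H y -> all_XH r -> perm_eq (factors y) (factors x ++ r) ->
  exists w, [/\ H w, y = x + w & perm_eq (factors w) r].
Proof.
move=> Hx Hy hr pe.
have e : shift y H = shift x (vprodl r).
  rewrite -vprodl_factors // (vprodl_perm pe) vprodl_cat vprodl_factors //.
  by rewrite -shift_setmul shift_vclose setmulC vclose_mulH vclose_vprodl.
have [w Dw ew] : shift x (vprodl r) y by rewrite -e; exact: shiftH_self.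
have Hw : H w by apply: (vprodl_sub hr).
exists w; split=> //; apply: factors_vprodl => //.
by rewrite -[vprodl r](shiftK x) -e -ew shift_shift addKr.
Qed.

Lemma massocP x y : H x -> H y -> massoc H x y <-> perm_eq (factors x) (factors y).
Proof.
move=> Hx Hy; split.
  move=> [_ [_ [Hxy Hyx]]].
  apply: factors_vprodl => //; first exact: all_XH_factors.
  rewrite vprodl_factors //; apply/seteqP; split=> _ [h Hh <-].
    by exists (- (x - y) + h); [apply: HD|rewrite opprB addrA [x + _]addrC subrK].
  by exists (x - y + h); [apply: HD|rewrite addrA [y + _]addrC subrK].
move=> pe.
have e : shift x H = shift y H by rewrite -!vprodl_factors // (vprodl_perm pe).
have [h Hh ex] : shift y H x by rewrite -e; exact: shiftH_self.
have [h' Hh' ey] : shift x H y by rewrite e; exact: shiftH_self.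
split=> //; split=> //; split; first by rewrite -ex addrC addKr.
by rewrite opprB -ey addrC addKr.
Qed.

Lemma vpow_minv p k : XH H p -> vpow H (M p) k = M (vprodl (nseq k p)).
Proof.
move=> hp; elim: k => [|k IH] /=; first by rewrite vprodl_nil minvH.
rewrite IH /vmul vclose_mul_minvs; first by rewrite -/(vmul H p _) -vprodl_cons.
  exact: XH_fractional.
exact/vprodl_fractional/all_XH_nseq.
Qed.

Definition zpos (z : int) : nat := if z is Posz n then n else 0%N.
Definition zneg (z : int) : nat := if z is Negz n then n.+1 else 0%N.

Lemma vpowzE p z : XH H p ->
  vpowz H p z = V (sm (vprodl (nseq (zpos z) p)) (M (vprodl (nseq (zneg z) p)))).
Proof.
move=> hp; case: z => n /=.
  by rewrite vprodl_nil minvH vclose_mulH vpow_vprodl vclose_vprodl.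
by rewrite vprodl_nil vclose_Hmul -/(vpow H (M p) n.+1) vpow_minv // vclose_minv.
Qed.

Lemma vpowz_neqH p z : XH H p -> z <> 0 -> vpowz H p z <> H.
Proof.
move=> hp z0; case: z z0 => n z0 /=.
  by apply: vpow_neqH => // n0; apply: z0; rewrite n0.
rewrite -/(vpow H (M p) n.+1) vpow_minv // => /vclose_eqH.
by rewrite vclose_vprodl -vpow_vprodl; apply: vpow_neqH.
Qed.

Lemma big_vmul_vprodl_minv (s : seq (set Q)) (P N : set Q -> seq (set Q)) :
  (forall q, q \in s -> all_XH (P q) /\ all_XH (N q)) ->
  \big[vmul H/H]_(q <- s) V (sm (vprodl (P q)) (M (vprodl (N q)))) =
  V (sm (vprodl (flatten (map P s))) (M (vprodl (flatten (map N s))))).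
Proof.
elim: s => [|q s IH] hs.
  by rewrite big_nil /= vprodl_nil minvH setmulHH vcloseH.
have [hPq hNq] := hs q (mem_head _ _).
have hs' r : r \in s -> all_XH (P r) /\ all_XH (N r).
  by move=> rs; apply: hs; rewrite inE rs orbT.
have hPs : all_XH (flatten (map P s)).
  by move=> r /flattenP [_ /mapP [t ts ->]]; case: (hs' t ts) => h _; apply: h.
have hNs : all_XH (flatten (map N s)).
  by move=> r /flattenP [_ /mapP [t ts ->]]; case: (hs' t ts) => _ h; apply: h.
rewrite big_cons IH // /= /vmul vclose_Vmul vclose_mulV setmulACA.
rewrite -vclose_Vmul -vclose_mulV vclose_mul_minvs; try exact: vprodl_fractional.
by rewrite -!vprodl_cat.
Qed.

Lemma vprodzE (T : set (set Q)) (a : set Q -> int) : finite_set T -> T `<=` XH H ->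
  exists P N, [/\ vprodz H T a = V (sm (vprodl P) (M (vprodl N))),
    all_XH P, all_XH N,
    forall p, count_mem p P = restrict T (zpos \o a) p &
    forall p, count_mem p N = restrict T (zneg \o a) p].
Proof.
move=> fT TX; set s := finite_support H T (fun q => vpowz H q (a q)).
have mems q : q \in s <-> T q /\ a q <> 0.
  rewrite in_finite_supportH //; split=> [[Tq nH]|[Tq e0]]; split=> //.
    by move=> e0; apply: nH; rewrite e0.
  exact: vpowz_neqH (TX q Tq) e0.
have us : uniq s := finite_support_uniq _ _ _.
have cnt (f : int -> nat) : f 0 = 0%N ->
    forall p, count_mem p (expand s (f \o a)) = restrict T (f \o a) p.
  move=> f0; apply: count_expand => // q; first by move=> /mems [].
  by move=> Tq nz; apply/mems; split=> // e; apply: nz; rewrite /= e.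
have hX (f : int -> nat) : all_XH (expand s (f \o a)).
  by apply: (all_XH_expand TX) => q /mems [].
exists (expand s (zpos \o a)), (expand s (zneg \o a)).
split; [|exact: hX|exact: hX|exact: cnt|exact: cnt].
rewrite /vprodz -/s (@eq_big_seq _ _ _ _ s _
  (fun q => V (sm (vprodl (nseq (zpos (a q)) q)) (M (vprodl (nseq (zneg (a q)) q)))))).
  by rewrite big_vmul_vprodl_minv // => q /mems [Tq _]; split; apply/all_XH_nseq/TX.
by move=> q /mems [Tq _]; rewrite vpowzE //; apply: TX.
Qed.

Definition same_class (l l' : seq (set Q)) := exists x : Q, vprodl l = shift x (vprodl l').

Lemma same_class_refl l : same_class l l.
Proof. by exists 0; rewrite shift0. Qed.

Lemma same_class_sym l l' : same_class l l' -> same_class l' l.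
Proof. by move=> [x e]; exists (- x); rewrite e shift_shift addNr shift0. Qed.

Lemma same_class_trans l1 l2 l3 :
  same_class l1 l2 -> same_class l2 l3 -> same_class l1 l3.
Proof. by move=> [x e1] [y e2]; exists (x + y); rewrite e1 e2 shift_shift. Qed.

Lemma same_class_perm l1 l1' l2 l2' : perm_eq l1 l1' -> perm_eq l2 l2' ->
  same_class l1 l2 -> same_class l1' l2'.
Proof. by move=> p1 p2 [x e]; exists x; rewrite -(vprodl_perm p1) -(vprodl_perm p2). Qed.

Lemma same_class_cat l1 l2 m1 m2 : same_class l1 l2 -> same_class m1 m2 ->
  same_class (l1 ++ m1) (l2 ++ m2).
Proof.
move=> [x e1] [y e2]; exists (x + y).
by rewrite !vprodl_cat e1 e2 setmul_shift shift_vclose.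
Qed.

Lemma same_class_catr l1 l2 m : all_XH m ->
  same_class (l1 ++ m) (l2 ++ m) -> same_class l1 l2.
Proof.
move=> hm [x e]; exists x.
have E : V (sm (vprodl m) (vprodl l1)) = V (sm (vprodl m) (shift x (vprodl l2))).
  rewrite setmulC -vprodl_cat e vprodl_cat -shift_vclose shift_setmul.
  by rewrite [in RHS]setmulC.
have := vmul_cancel (vprodl_fractional hm) E.
by rewrite vclose_vprodl shift_vclose vclose_vprodl.
Qed.

Lemma same_class_nil l : all_XH l ->
  same_class l [::] <-> exists a, H a /\ perm_eq (factors a) l.
Proof.
move=> hl; split.
  move=> [x e]; rewrite vprodl_nil in e.
  have Hx : H x by apply: (vprodl_sub hl); rewrite e; exact: shiftH_self.
  by exists x; split=> //; apply: factors_vprodl.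
move=> [a [Ha pa]]; exists a.
by rewrite -(vprodl_perm pa) vprodl_factors // vprodl_nil.
Qed.

Lemma class_zero_vprod T (al : set Q -> nat) L : finite_set T -> T `<=` XH H ->
  (forall p, count_mem p L = restrict T al p) ->
  class_zero H (vprod H T al) <-> same_class L [::].
Proof.
move=> fT TX cL.
have [L' [-> _ cL']] := vprodE al fT TX.
have pe : perm_eq L L' by apply: perm_count_mem => p; rewrite cL cL'.
by rewrite -(vprodl_perm pe) /class_zero /same_class vprodl_nil.
Qed.

Lemma class_zero_vprodz T (al : set Q -> int) P N : finite_set T -> T `<=` XH H ->
  all_XH N ->
  (forall p, count_mem p P = restrict T (zpos \o al) p) ->
  (forall p, count_mem p N = restrict T (zneg \o al) p) ->
  class_zero H (vprodz H T al) <-> same_class P N.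
Proof.
move=> fT TX hN cP cN.
have [P' [N' [-> _ _ cP' cN']]] := vprodzE al fT TX.
have pP : perm_eq P P' by apply: perm_count_mem => p; rewrite cP cP'.
have pN : perm_eq N N' by apply: perm_count_mem => p; rewrite cN cN'.
have fN := vprodl_fractional hN.
rewrite -(vprodl_perm pP) -(vprodl_perm pN) /class_zero; split.
  move=> [x e]; exists x.
  have E1 : vprodl P = V (sm (V (sm (vprodl P) (M (vprodl N)))) (vprodl N)).
    rewrite vclose_Vmul -setmulA [sm (M (vprodl N)) (vprodl N)]setmulC -vclose_mulV.
    by rewrite vclose_mul_minv // vclose_mulH vclose_vprodl.
  by rewrite E1 e -shift_setmul shift_vclose vclose_Hmul vclose_vprodl.
move=> [x ->]; exists x.
by rewrite -shift_setmul shift_vclose vclose_mul_minv // vcloseH.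
Qed.

Lemma H_sum (l : seq Q) : (forall u, u \in l -> H u) -> H (\sum_(u <- l) u).
Proof.
elim: l => [|u l IH] hl; first by rewrite big_nil.
rewrite big_cons; apply: HD; first by apply: hl; rewrite inE eqxx.
by apply: IH => v vl; apply: hl; rewrite inE vl orbT.
Qed.

Lemma H_mulrn a n : H a -> H (a *+ n).
Proof. by move=> Ha; elim: n => [|n IH]; rewrite ?mulr0n // mulrS; apply: HD. Qed.

Lemma factors_sum (l : seq Q) : (forall u, u \in l -> H u) ->
  perm_eq (factors (\sum_(u <- l) u)) (flatten (map factors l)).
Proof.
elim: l => [|u l IH] hl; first by rewrite big_nil factors0.
have Hu : H u by apply: hl; rewrite inE eqxx.
have hl' v : v \in l -> H v by move=> vl; apply: hl; rewrite inE vl orbT.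
rewrite big_cons /=; apply: perm_trans (factorsD Hu (H_sum hl')) _.
by rewrite perm_cat2l; apply: IH.
Qed.

Lemma count_factors_sum (l : seq Q) p : (forall u, u \in l -> H u) ->
  count_mem p (factors (\sum_(u <- l) u)) =
  sumn (map (fun u => count_mem p (factors u)) l).
Proof. by move=> hl; rewrite (permP (factors_sum hl)) count_flatten -map_comp. Qed.

Lemma count_factors_mulrn a n p : H a ->
  count_mem p (factors (a *+ n)) = (n * count_mem p (factors a))%N.
Proof.
move=> Ha; elim: n => [|n IH]; first by rewrite mulr0n factors0.
by rewrite mulrS (permP (factorsD Ha (H_mulrn n Ha))) count_cat IH mulSn.
Qed.

Lemma mem_factors_mulrn a n p : H a -> p \in factors (a *+ n) -> p \in factors a.
Proof. by move=> Ha; rewrite -!count_mem_gt0 count_factors_mulrn // muln_gt0 => /andP []. Qed.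

Lemma mem_factors_sum (l : seq Q) u p : (forall v, v \in l -> H v) -> u \in l ->
  p \in factors u -> p \in factors (\sum_(v <- l) v).
Proof.
move=> hl ul pu; rewrite (perm_mem (factors_sum hl)).
by apply/flattenP; exists (factors u) => //; apply: map_f.
Qed.

Lemma mirreducible_H u : mirreducible H u -> H u. Proof. by case. Qed.
Lemma mirreducible_nonunit u : mirreducible H u -> ~ munit H u. Proof. by case. Qed.

Lemma nonunit_factors a : H a -> ~ munit H a -> exists p, p \in factors a.
Proof.
move=> Ha nua; case e: (factors a) => [|p l]; first by case: nua; apply/munitP.
by exists p; rewrite mem_head.
Qed.

Lemma atomic b : H b -> ~ munit H b ->
  exists l : seq Q, [/\ l <> [::], forall u, u \in l -> mirreducible H u &
                        b = \sum_(u <- l) u].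
Proof.
move=> Hb; move: {2}(size (factors b)) (leqnn (size (factors b))) => n.
elim: n b Hb => [|n IH] b Hb sb nub.
  by case: nub; apply/(munitP Hb); apply/nilP; rewrite /nilp -leqn0.
case: (pselect (mirreducible H b)) => [ib|nib].
  by exists [:: b]; split=> //; [move=> u; rewrite inE => /eqP ->|rewrite big_seq1].
have [x [y [Hx Hy exy [nux nuy]]]] :
    exists x y, [/\ H x, H y, b = x + y & ~ munit H x /\ ~ munit H y].
  apply: contrapT => nex; apply: nib; split=> // x y Hx Hy e.
  by apply: contrapT => /not_orP [nux nuy]; apply: nex; exists x, y.
have pe := factorsD Hx Hy; rewrite -exy in pe.
have [px xp] := nonunit_factors Hx nux; have [py yp] := nonunit_factors Hy nuy.
have sx : (size (factors x) <= n)%N.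
  rewrite -ltnS; apply: leq_trans sb; rewrite (perm_size pe) size_cat -addn1 leq_add2l.
  by rewrite lt0n size_eq0; apply/eqP => e; rewrite e in yp.
have sy : (size (factors y) <= n)%N.
  rewrite -ltnS; apply: leq_trans sb; rewrite (perm_size pe) size_cat -add1n leq_add2r.
  by rewrite lt0n size_eq0; apply/eqP => e; rewrite e in xp.
have [lx [nx ax ex]] := IH x Hx sx nux.
have [ly [ny ay ey]] := IH y Hy sy nuy.
exists (lx ++ ly); split.
- by case: lx nx {ax ex}.
- by move=> u; rewrite mem_cat => /orP [/ax|/ay].
- by rewrite big_cat -ex -ey.
Qed.

Lemma mirreducible_factors_le a x : H a -> ~ munit H a -> mirreducible H x ->
  (forall p, count_mem p (factors a) <= count_mem p (factors x))%N ->
  perm_eq (factors x) (factors a).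
Proof.
move=> Ha nua [Hx _ irrx] cb.
have [r pr] := count_mem_le_perm_cat cb.
have hr : all_XH r.
  by move=> p pr'; apply: (all_XH_factors Hx); rewrite (perm_mem pr) mem_cat pr' orbT.
have [w [Hw ex pw]] := factors_dvd Ha Hx hr pr.
have /(munitP Hw) fw : munit H w by case: (irrx a w Ha Hw ex).
rewrite fw in pw.
have r0 : r = [::] by apply/eqP; rewrite -size_eq0 -(perm_size pw).
by rewrite r0 cats0 in pr.
Qed.

(* An atom is absolutely irreducible as soon as every atom built from its
   primes is associated to it: then all factors of u *+ n are associates of u,
   and counting any prime of u gives their number. *)
Lemma abs_irreducible_of_massoc u : mirreducible H u ->
  (forall x, mirreducible H x -> {subset factors x <= factors u} -> massoc H x u) ->
  abs_irreducible H u.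
Proof.
move=> iu assoc; have Hu := mirreducible_H iu.
split=> // n l irrl sum_l.
have Hl v : v \in l -> H v by move=> /irrl /mirreducible_H.
have pl v : v \in l -> perm_eq (factors v) (factors u).
  move=> vl; apply/(massocP (Hl v vl) Hu); apply: assoc; first exact: irrl.
  move=> p pv; apply: (mem_factors_mulrn (n := n) Hu).
  by rewrite -sum_l; exact: mem_factors_sum pv.
split; last by move=> v vl; apply/(massocP (Hl v vl) Hu)/pl.
have [q qu] := nonunit_factors Hu (mirreducible_nonunit iu).
have := count_factors_sum q Hl; rewrite sum_l count_factors_mulrn //.
rewrite (sumn_map_const (k := count_mem q (factors u))); last first.
  by move=> v vl; rewrite (permP (pl v vl)).
by move/eqP; rewrite eqn_pmul2r ?count_mem_gt0 // => /eqP.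
Qed.

(* If a is absolutely irreducible and the primes of a nonunit b occur in a, then
   b divides a *+ n with a nonunit cofactor, so the atoms of b are associates
   of a and b has all the primes of a. *)
Lemma abs_irreducible_factors_sub a b : abs_irreducible H a -> H b -> ~ munit H b ->
  {subset factors b <= factors a} -> {subset factors a <= factors b}.
Proof.
move=> [ia abs_a] Hb nub ba; have Ha := mirreducible_H ia.
pose n := (size (factors b)).+1.
have cb p : (count_mem p (factors b) <= count_mem p (factors (a *+ n)))%N.
  rewrite count_factors_mulrn //.
  case: (boolP (p \in factors b)) => pb; last by move/count_memPn: pb => ->.
  apply: leq_trans (count_size _ _) _; apply: ltnW; apply: leq_pmulr.
  by rewrite count_mem_gt0 ba.
have [r pr] := count_mem_le_perm_cat cb.
have hr : all_XH r.
  move=> p pr'; apply: (all_XH_factors (H_mulrn n Ha)).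
  by rewrite (perm_mem pr) mem_cat pr' orbT.
have [w [Hw ew _]] := factors_dvd Hb (H_mulrn n Ha) hr pr.
have nuw : ~ munit H w.
  move/(munitP Hw) => w0; have [q qa] := nonunit_factors Ha (mirreducible_nonunit ia).
  have := permP (factorsD Hb Hw) (pred1 q).
  rewrite -ew w0 cats0 count_factors_mulrn // => e.
  have le := count_size (pred1 q) (factors b); rewrite -e in le.
  have : (n <= n * count_mem q (factors a))%N by rewrite leq_pmulr // count_mem_gt0.
  by move=> /leq_trans /(_ le); rewrite ltnn.
have [l1 [nl1 irr1 e1]] := atomic Hb nub.
have [l2 [_ irr2 e2]] := atomic Hw nuw.
have irrl : forall u, u \in l1 ++ l2 -> mirreducible H u.
  by move=> u; rewrite mem_cat => /orP [/irr1|/irr2].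
have sum_l : \sum_(u <- l1 ++ l2) u = a *+ n by rewrite big_cat -e1 -e2 ew.
have [_ assoc] := abs_a n (l1 ++ l2) irrl sum_l.
case: l1 nl1 irr1 e1 {irrl sum_l} assoc => [//|x l1] _ irr1 e1 assoc p pa.
have Hl v : v \in x :: l1 -> H v by move=> /irr1 /mirreducible_H.
have Hx := Hl x (mem_head _ _).
rewrite e1; apply: (mem_factors_sum Hl (mem_head _ _)).
have /(massocP Hx Ha) px : massoc H x a by apply: assoc; rewrite mem_head.
by rewrite (perm_mem px).
Qed.

Lemma abs_irreducible_minimal a : abs_irreducible H a ->
  minimal_in (supps_nonunits H) (supp H (principal H a)).
Proof.
move=> aa; have [ia _] := aa; have Ha := mirreducible_H ia.
split; first by exists a; split=> //; exact: mirreducible_nonunit.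
move=> T [b [Hb nub <-]]; rewrite !supp_principal // => ba.
apply/seteqP; split=> // p; apply: (abs_irreducible_factors_sub aa Hb nub) => q qb.
exact: ba.
Qed.

Lemma minimal_nonunits_irreducibles S :
  minimal_in (supps_nonunits H) S -> minimal_in (supps_irreducibles H) S.
Proof.
move=> [[b [Hb nub sb]] mn].
have [[|u l] [nl irrl el]] := atomic Hb nub; first by [].
have iu := irrl u (mem_head _ _); have Hu := mirreducible_H iu.
have Hl v : v \in u :: l -> H v by move=> /irrl /mirreducible_H.
split.
  exists u; split=> //; apply: mn; first by exists u; split=> //; apply: mirreducible_nonunit.
  move=> p; rewrite -sb !supp_principal // el => /= pu.
  exact: mem_factors_sum Hl (mem_head _ _) pu.
move=> T [w [iw sw]] TS; apply: mn => //.
by exists w; split=> //; [apply: mirreducible_H|apply: mirreducible_nonunit].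
Qed.

Section Support.
Variable S : set (set Q).
Hypothesis SX : S `<=` XH H.
Hypothesis S_neq0 : S !=set0.
Variable sS : seq (set Q).
Hypothesis sS_uniq : uniq sS.
Hypothesis mem_sS : forall p, p \in sS <-> S p.

Lemma finite_S : finite_set S.
Proof. by apply/finite_seqP; exists sS; apply/seteqP; split=> p /= /mem_sS. Qed.

(* Only the values of an exponent vector on S matter: it is read through mS. *)
Definition mS (c : set Q -> nat) := expand sS c.
Definition addv (c d : set Q -> nat) p := (c p + d p)%N.
Definition scalev (k : nat) (c : set Q -> nat) p := (k * c p)%N.
Definition zerov : set Q -> nat := fun=> 0%N.
Definition same_classS c d := same_class (mS c) (mS d).

Definition mult (a : Q) p := count_mem p (factors a).
Definition factors_in_S (a : Q) := forall p, p \in factors a -> S p.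

Lemma count_mS c p : count_mem p (mS c) = restrict S c p.
Proof. by apply: count_expand => // q; [move/mem_sS|move=> /mem_sS]. Qed.

Lemma all_XH_mS c : all_XH (mS c).
Proof. by apply: (all_XH_expand SX) => q /mem_sS. Qed.

Lemma mS_eq c d : (forall p, S p -> c p = d p) -> perm_eq (mS c) (mS d).
Proof.
move=> h; apply: perm_count_mem => p; rewrite !count_mS /restrict.
by case: asboolP => // /h.
Qed.

Lemma same_classS_eq c c' d d' : (forall p, S p -> c p = c' p) ->
  (forall p, S p -> d p = d' p) -> same_classS c d -> same_classS c' d'.
Proof. by move=> hc hd; apply: same_class_perm; apply: mS_eq. Qed.

Lemma same_classS_trans c d e : same_classS c d -> same_classS d e -> same_classS c e.
Proof. exact: same_class_trans. Qed.

Lemma same_classS_sym c d : same_classS c d -> same_classS d c.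
Proof. exact: same_class_sym. Qed.

Lemma mS_add c d : perm_eq (mS (addv c d)) (mS c ++ mS d).
Proof.
apply: perm_count_mem => p; rewrite count_cat !count_mS /restrict /addv.
by case: asboolP.
Qed.

Lemma same_classS_add c d c' d' : same_classS c d -> same_classS c' d' ->
  same_classS (addv c c') (addv d d').
Proof.
move=> h h'; apply: (same_class_perm _ _ (same_class_cat h h')).
  by rewrite perm_sym; apply: mS_add.
by rewrite perm_sym; apply: mS_add.
Qed.

Lemma same_classS_addr c d e : same_classS (addv c e) (addv d e) -> same_classS c d.
Proof.
move=> h; apply: (@same_class_catr _ _ (mS e)); first exact: all_XH_mS.
by apply: (same_class_perm _ _ h); exact: mS_add.
Qed.

Lemma same_classS_scale k c d : same_classS c d -> same_classS (scalev k c) (scalev k d).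
Proof.
move=> h; elim: k => [|k IH].
  by apply: (same_classS_eq _ _ (same_class_refl (mS zerov))) => p _; rewrite /scalev mul0n.
apply: (@same_classS_eq (addv c (scalev k c)) _ (addv d (scalev k d))).
- by move=> p _; rewrite /addv /scalev mulSn.
- by move=> p _; rewrite /addv /scalev mulSn.
exact: same_classS_add.
Qed.

Lemma same_classS_scale0 k c : same_classS c zerov -> same_classS (scalev k c) zerov.
Proof.
move=> h; apply: (same_classS_eq _ _ (same_classS_scale k h)) => // p _.
by rewrite /scalev muln0.
Qed.

Lemma same_classS0P c : same_classS c zerov <-> exists a, H a /\ perm_eq (factors a) (mS c).
Proof.
rewrite /same_classS.
have -> : mS zerov = [::] by rewrite /mS /expand; elim: sS.
exact/same_class_nil/all_XH_mS.
Qed.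

Lemma same_classS_mult a : H a -> factors_in_S a -> same_classS (mult a) zerov.
Proof.
move=> Ha ia; apply/same_classS0P; exists a; split=> //.
apply: perm_count_mem => p; rewrite count_mS /restrict /mult.
case: asboolP => // nSp; apply/count_memPn; apply/negP => /ia.
exact: nSp.
Qed.

Lemma classes_N_dependentP T : T `<=` S -> classes_N_dependent H T <->
  exists al : set Q -> nat,
    (exists p, T p /\ al p <> 0%N) /\ same_classS (restrict T al) zerov.
Proof.
move=> TS.
have key al : class_zero H (vprod H T al) <-> same_classS (restrict T al) zerov.
  rewrite /same_classS; have -> : mS zerov = [::] by rewrite /mS /expand; elim: sS.
  apply: (class_zero_vprod (sub_finite_set TS finite_S) (subset_trans TS SX)).
  move=> p; rewrite count_mS /restrict; case: asboolP => // Sp.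
  by case: asboolP => // /TS.
by split=> -[al [nz cz]]; exists al; split=> //; apply/key.
Qed.

Lemma int_subn_lt (m n : nat) : (m < n)%N -> m%:Z - n%:Z = Negz (n - m).-1.
Proof.
by move=> h; rewrite NegzE prednK ?subn_gt0 // -subzn ?(ltnW h) // opprB.
Qed.

Lemma zpos_sub (m n : nat) : zpos (m%:Z - n%:Z) = (m - n)%N.
Proof.
case: (leqP n m) => h; first by rewrite subzn.
by rewrite int_subn_lt //=; apply/esym/eqP; rewrite subn_eq0 ltnW.
Qed.

Lemma zneg_sub (m n : nat) : zneg (m%:Z - n%:Z) = (n - m)%N.
Proof.
case: (leqP n m) => h; first by rewrite subzn //=; apply/esym/eqP; rewrite subn_eq0.
by rewrite int_subn_lt //= prednK // subn_gt0.
Qed.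

Lemma classes_Z_independentP T : T `<=` S -> classes_Z_independent H T <->
  forall c d, same_classS (restrict T c) (restrict T d) -> forall p, T p -> c p = d p.
Proof.
move=> TS.
have cnt (al : set Q -> nat) p : count_mem p (mS (restrict T al)) = restrict T al p.
  rewrite count_mS /restrict; case: asboolP => // Sp.
  by case: asboolP => // /TS.
have key (al : set Q -> int) : class_zero H (vprodz H T al) <->
    same_classS (restrict T (zpos \o al)) (restrict T (zneg \o al)).
  rewrite /same_classS.
  apply: (class_zero_vprodz (sub_finite_set TS finite_S) (subset_trans TS SX)) => [|p|p].
  - exact: all_XH_mS.
  - by rewrite cnt.
  - by rewrite cnt.
split.
  move=> zi c d h p Tp.
  pose al q := (c q)%:Z - (d q)%:Z.
  have h2 : same_classS (restrict T (zpos \o al)) (restrict T (zneg \o al)).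
    apply: (@same_classS_addr _ _ (restrict T (fun q => minn (c q) (d q)))).
    apply: (same_classS_eq _ _ h) => q _; rewrite /addv /restrict /al /=;
      case: asboolP => // _; rewrite ?zpos_sub ?zneg_sub.
      by rewrite minnE subnKC // leq_subr.
    by rewrite minnC minnE subnKC // leq_subr.
  have := zi al (proj2 (key al) h2) p Tp; rewrite /al => /eqP.
  by rewrite subr_eq0 => /eqP [].
move=> h al /key cz p Tp.
by have := h _ _ cz p Tp; rewrite /=; case: (al p) => [[|n]|n].
Qed.

Lemma setD1_proper q : S q -> S `\` [set q] `<=` S /\ S `\` [set q] <> S.
Proof.
move=> Sq; split; first by move=> x [].
move=> e; have : (S `\` [set q]) q by rewrite e.
by case=> _; apply.
Qed.

Lemma setD1_notin q x : S x -> ~ (S `\` [set q]) x -> x = q.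
Proof. by move=> Sx nT; apply: contrapT => nxq; apply: nT. Qed.

Lemma restrict_setD1 q c : c q = 0%N -> forall p, S p -> restrict (S `\` [set q]) c p = c p.
Proof.
move=> cq p Sp; rewrite /restrict; case: asboolP => // nT.
by rewrite (setD1_notin Sp nT).
Qed.

Definition proper_N_independent :=
  forall T, T `<=` S -> T <> S -> classes_N_independent H T.
Definition proper_Z_independent :=
  forall T, T `<=` S -> T <> S -> classes_Z_independent H T.

Lemma factors_in_S_supp x : H x -> supp H (principal H x) `<=` S -> factors_in_S x.
Proof. by move=> Hx sx p px; apply: sx; rewrite supp_principal. Qed.

Section ZIndependent.
Hypothesis Zind : proper_Z_independent.

Lemma same_classS0_pos c : same_classS c zerov -> (exists p, S p /\ c p <> 0%N) ->
  forall p, S p -> (0 < c p)%N.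
Proof.
move=> h [p1 [Sp1 c1]] r Sr; rewrite lt0n; apply/eqP => cr.
have [T'S T'n] := setD1_proper Sr.
apply: (c1); apply: (proj1 (classes_Z_independentP T'S) (Zind T'S T'n) c zerov).
  by apply: (same_classS_eq _ _ h) => p Sp; rewrite restrict_setD1.
by split=> // e; apply: c1; rewrite e.
Qed.

(* Any two zero-class vectors are proportional: subtracting suitable multiples
   yields a relation on the proper subfamily S \ {q}. *)
Lemma same_classS0_proportional q c d : S q ->
  same_classS c zerov -> same_classS d zerov ->
  forall p, S p -> (d q * c p = c q * d p)%N.
Proof.
move=> Sq hc hd.
pose X := scalev (d q) c; pose Y := scalev (c q) d.
have hXY : same_classS X Y.
  exact: same_classS_trans (same_classS_scale0 _ hc) (same_classS_sym (same_classS_scale0 _ hd)).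
have [T'S T'n] := setD1_proper Sq.
pose del p := if `[< p = q >] then X p else 0%N.
have split_T' Z p : S p -> Z q = X q -> Z p = addv (restrict (S `\` [set q]) Z) del p.
  move=> Sp ZX; rewrite /addv /restrict /del.
  case: asboolP => [[_ npq]|nT].
    by case: asboolP => [/npq|_]; last rewrite addn0.
  by rewrite (setD1_notin Sp nT) !asboolT.
have h2 : same_classS (addv (restrict (S `\` [set q]) X) del)
                      (addv (restrict (S `\` [set q]) Y) del).
  apply: (same_classS_eq _ _ hXY) => p Sp; apply: split_T' => //.
  by rewrite /X /Y /scalev mulnC.
have zi := proj1 (classes_Z_independentP T'S) (Zind T'S T'n) _ _ (same_classS_addr h2).
move=> p Sp; case: (pselect (p = q)) => [->|npq]; first by rewrite mulnC.
exact: zi p (conj Sp npq).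
Qed.

Lemma supp_nonunit_in_S z : H z -> ~ munit H z -> factors_in_S z ->
  supp H (principal H z) = S.
Proof.
move=> Hz nuz zS; rewrite supp_principal //; apply/seteqP; split=> [p /zS //|p Sp /=].
have [q qz] := nonunit_factors Hz nuz.
rewrite -count_mem_gt0; apply: (same_classS0_pos (same_classS_mult Hz zS)) => //.
by exists q; split; [exact: zS|rewrite /mult; apply/eqP; rewrite -lt0n count_mem_gt0].
Qed.

(* By proportionality the atom with the smaller exponent at q0 has its factors
   dominated by those of the other, hence they are associated. *)
Lemma mirreducible_in_S_massoc x y : mirreducible H x -> mirreducible H y ->
  factors_in_S x -> factors_in_S y -> massoc H x y.
Proof.
have [q0 Sq0] := S_neq0.
have dominated z z' : mirreducible H z -> mirreducible H z' ->
    factors_in_S z -> factors_in_S z' -> (mult z q0 <= mult z' q0)%N ->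
    perm_eq (factors z') (factors z).
  move=> [Hz nuz _] iz' zS z'S le; have Hz' := mirreducible_H iz'.
  have pos : (0 < mult z' q0)%N.
    have : supp H (principal H z') q0 by rewrite (supp_nonunit_in_S Hz' (mirreducible_nonunit iz')).
    by rewrite supp_principal // count_mem_gt0.
  apply: (mirreducible_factors_le Hz nuz iz') => p.
  case: (pselect (S p)) => [Sp|nSp]; last first.
    by rewrite (_ : count_mem p _ = 0%N) //; apply/count_memPn/negP => /zS.
  rewrite -(leq_pmul2l pos).
  rewrite (same_classS0_proportional Sq0 (same_classS_mult Hz zS) (same_classS_mult Hz' z'S) Sp).
  exact: leq_mul.
move=> ix iy xS yS; have Hx := mirreducible_H ix; have Hy := mirreducible_H iy.
apply/(massocP Hx Hy); case: (leqP (mult x q0) (mult y q0)) => le.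
  by rewrite perm_sym; exact: dominated.
by apply: dominated => //; exact: ltnW.
Qed.

Lemma N_dependent_atom : classes_N_dependent H S ->
  exists u, mirreducible H u /\ supp H (principal H u) = S.
Proof.
move=> /(classes_N_dependentP (@subset_refl _ S)) [al [[p1 [Sp1 al1]]]].
move=> /same_classS0P [b [Hb pb]].
have cb p : count_mem p (factors b) = restrict S (restrict S al) p by rewrite (permP pb) count_mS.
have bS : factors_in_S b.
  by move=> p; rewrite -count_mem_gt0 cb /restrict; case: asboolP.
have nub : ~ munit H b.
  move/(munitP Hb) => b0; have := cb p1; rewrite b0 /restrict !asboolT //.
  by move/esym.
have [[|u l] [nl irrl el]] := atomic Hb nub; first by [].
have Hl v : v \in u :: l -> H v by move=> /irrl /mirreducible_H.
have iu := irrl u (mem_head _ _); have Hu := mirreducible_H iu.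
exists u; split=> //; apply: (supp_nonunit_in_S Hu (mirreducible_nonunit iu)).
by move=> p pu; apply: bS; rewrite el; exact: mem_factors_sum Hl (mem_head _ _) pu.
Qed.

Lemma Z_independent_abs_irreducible : classes_N_dependent H S ->
  exists a, abs_irreducible H a /\ supp H (principal H a) = S.
Proof.
move=> /N_dependent_atom [u [iu su]]; exists u; split=> //.
have uS : factors_in_S u by apply: factors_in_S_supp; [exact: mirreducible_H|rewrite su].
apply: abs_irreducible_of_massoc => // x ix xu.
by apply: mirreducible_in_S_massoc => // p /xu /uS.
Qed.

End ZIndependent.

Lemma minimal_irreducibles_N_independent : minimal_in (supps_irreducibles H) S ->
  classes_N_dependent H S /\ proper_N_independent.
Proof.
move=> [[u [iu su]] mi]; have Hu := mirreducible_H iu.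
have uS : factors_in_S u by apply: (factors_in_S_supp Hu); rewrite su.
split.
  apply/(classes_N_dependentP (@subset_refl _ S)); exists (mult u); split.
    have [p pu] := nonunit_factors Hu (mirreducible_nonunit iu).
    by exists p; split; [exact: uS|apply/eqP; rewrite -lt0n count_mem_gt0].
  by apply: (same_classS_eq _ _ (same_classS_mult Hu uS)) => // p Sp; rewrite /restrict asboolT.
move=> T TS TnS /(classes_N_dependentP TS) [al [[p0 [Tp0 al0]] /same_classS0P [a [Ha pa]]]].
have ca p : count_mem p (factors a) = restrict S (restrict T al) p by rewrite (permP pa) count_mS.
have nua : ~ munit H a.
  move/(munitP Ha) => a0; have := ca p0; rewrite a0 /restrict !asboolT //; last exact: TS.
  by move/esym.
have [[|w l] [nl irrl el]] := atomic Ha nua; first by [].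
have iw := irrl w (mem_head _ _); have Hw := mirreducible_H iw.
have Hl v : v \in w :: l -> H v by move=> /irrl /mirreducible_H.
have wT : supp H (principal H w) `<=` T.
  move=> p; rewrite supp_principal // => /= pw.
  have : p \in factors a by rewrite el; exact: mem_factors_sum Hl (mem_head _ _) pw.
  by rewrite -count_mem_gt0 ca /restrict; case: asboolP => // _; case: asboolP.
apply: TnS; apply/seteqP; split=> //.
by rewrite -(mi _ (ex_intro _ w (conj iw erefl)) (subset_trans wT TS)).
Qed.

Section NIndependent.
Hypothesis Nind : proper_N_independent.

Lemma N_dependent_positive : classes_N_dependent H S ->
  exists A, same_classS A zerov /\ forall r, S r -> (0 < A r)%N.
Proof.
move=> /(classes_N_dependentP (@subset_refl _ S)) [al [[p1 [Sp1 al1]] hA]].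
exists (restrict S al); split=> // r Sr; rewrite lt0n; apply/eqP => Ar.
have [T'S T'n] := setD1_proper Sr.
apply: (Nind T'S T'n); apply/(classes_N_dependentP T'S); exists (restrict S al); split.
  exists p1; rewrite /restrict asboolT //; split=> //; split=> // e.
  by move: Ar; rewrite -e /restrict asboolT.
by apply: (same_classS_eq _ _ hA) => // x Sx; rewrite restrict_setD1.
Qed.

(* If D p < C p somewhere, let q minimize A q / (C q - D q) and b := C q - D q:
   then b A + A q D - A q C is a nonnegative relation vanishing at q but not
   at r0, contradicting the N-independence of S \ {q}. *)
Lemma same_classS_exchange A C D r0 : same_classS A zerov -> (forall r, S r -> 0 < A r)%N ->
  same_classS C D -> S r0 -> C r0 = 0%N -> D r0 = 0%N ->
  forall p, S p -> (C p <= D p)%N.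
Proof.
move=> hA Apos hCD Sr0 Cr0 Dr0 p0 Sp0; rewrite leqNgt; apply/negP => lt0.
have [q [qs /= Pq mq]] := seq_min_ratio (P := [pred r | D r < C r]%N) A
    (g := fun r => C r - D r)%N (fun r Pr => ltac:(by rewrite subn_gt0))
    (introT hasP (ex_intro2 _ _ p0 (proj2 (mem_sS p0) Sp0) lt0)).
have Sq : S q by apply/mem_sS.
pose b := (C q - D q)%N.
have nt r : S r -> (A q * C r <= b * A r + A q * D r)%N.
  move=> Sr; case: (ltnP (D r) (C r)) => Pr.
    have := mq r (proj2 (mem_sS r) Sr) Pr => /= h.
    by rewrite addnC -leq_subLR -mulnBr [(b * _)%N]mulnC.
  by apply: leq_trans (leq_addl _ _); rewrite leq_mul2l Pr orbT.
pose g r := (b * A r + A q * D r - A q * C r)%N.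
have hg : same_classS g zerov.
  apply: (@same_classS_addr _ _ (scalev (A q) C)).
  have h1 : same_classS (addv (scalev b A) (scalev (A q) D)) (addv zerov (scalev (A q) C)).
    exact: same_classS_add (same_classS_scale0 b hA) (same_classS_sym (same_classS_scale (A q) hCD)).
  by apply: (same_classS_eq _ _ h1) => r Sr //; rewrite /addv /scalev /g subnK // nt.
have gq : g q = 0%N by rewrite /g /b mulnC -mulnDr subnK ?subnn //; exact: ltnW.
have gr0 : g r0 = (b * A r0)%N by rewrite /g Cr0 Dr0 !muln0 addn0 subn0.
have gpos : (0 < g r0)%N by rewrite gr0 muln_gt0 subn_gt0 Pq Apos.
have [T'S T'n] := setD1_proper Sq.
apply: (Nind T'S T'n); apply/(classes_N_dependentP T'S); exists g; split.
  exists r0; split; last by rewrite gr0; apply/eqP; rewrite -lt0n -gr0.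
  by split=> // erq; move: gpos; rewrite erq gq.
by apply: (same_classS_eq _ _ hg) => // x Sx; rewrite restrict_setD1.
Qed.

Lemma N_independent_Z_independent : classes_N_dependent H S -> proper_Z_independent.
Proof.
move=> /N_dependent_positive [A [hA Apos]] T TS TnS.
have [r0 [Sr0 nTr0]] : exists r, S r /\ ~ T r.
  apply: contrapT => nex; apply: TnS; apply/seteqP; split=> // x Sx.
  by apply: contrapT => nTx; apply: nex; exists x.
have van c : restrict T c r0 = 0%N by rewrite /restrict; case: asboolP.
apply/(classes_Z_independentP TS) => c d h p Tp.
have := same_classS_exchange hA Apos h Sr0 (van c) (van d) (TS p Tp).
have := same_classS_exchange hA Apos (same_classS_sym h) Sr0 (van d) (van c) (TS p Tp).
by rewrite /restrict asboolT // => le1 le2; apply/eqP; rewrite eqn_leq le1 le2.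
Qed.

End NIndependent.

Lemma abs_irreducible_support_tfae :
  [<-> (exists a, abs_irreducible H a /\ supp H (principal H a) = S);
       minimal_in (supps_nonunits H) S;
       minimal_in (supps_irreducibles H) S;
       classes_N_dependent H S /\ proper_N_independent;
       classes_N_dependent H S /\ proper_Z_independent].
Proof.
tfae.
- by move=> [a [aa <-]]; exact: abs_irreducible_minimal.
- exact: minimal_nonunits_irreducibles.
- exact: minimal_irreducibles_N_independent.
- by move=> [nd Nind]; split=> //; exact: N_independent_Z_independent.
- by move=> [nd Zind]; exact: Z_independent_abs_irreducible.
Qed.

Lemma abs_irreducible_support_uniq a b :
  abs_irreducible H a -> abs_irreducible H b ->
  supp H (principal H a) = S -> supp H (principal H b) = S -> massoc H a b.
Proof.
move=> aa ab sa sb.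
have [_ Zind] : classes_N_dependent H S /\ proper_Z_independent.
  by apply/(abs_irreducible_support_tfae 0 4); exists a.
have [[ia _] [ib _]] := (aa, ab); have [Ha Hb] := (mirreducible_H ia, mirreducible_H ib).
by apply: mirreducible_in_S_massoc => //; apply: factors_in_S_supp; rewrite ?sa ?sb.
Qed.

End Support.

End Krull.

Theorem mainTheorem11 (Q : zmodType) (H : set Q) (S : set (set Q)) :
  krull_monoid H ->
  S !=set0 -> finite_set S -> S `<=` XH H ->
  [<-> (exists a, abs_irreducible H a /\ supp H (principal H a) = S);
       minimal_in (supps_nonunits H) S;
       minimal_in (supps_irreducibles H) S;
       classes_N_dependent H S /\
         (forall T, T `<=` S -> T <> S -> classes_N_independent H T);
       classes_N_dependent H S /\
         (forall T, T `<=` S -> T <> S -> classes_Z_independent H T)]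
  /\
  (forall a b, abs_irreducible H a -> abs_irreducible H b ->
     supp H (principal H a) = S -> supp H (principal H b) = S ->
     massoc H a b).
Proof.
move=> [[H0 HD _] acc cic] nS /finite_seqP [s eS] SX.
have mem_sS p : p \in undup s <-> S p by rewrite eS /= mem_undup.
split.
  exact: (abs_irreducible_support_tfae H0 HD cic acc SX nS (undup_uniq s) mem_sS).
exact: (abs_irreducible_support_uniq H0 HD cic acc SX nS (undup_uniq s) mem_sS).
Qed.
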